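(* Let $(\Omega,\mathscr A)$ be a measurable space, $\mathscr C\subseteq\mathscr A$ a concept class, and $I$ an ideal of subsets of $\Omega$. Let $S_I$ be the set of all ultrafilters on $\Omega$ containing no element of $I$, and regard each $C\in\mathscr C$ as the $\{0,1\}$-valued function $\xi\mapsto[C\in\xi]$ on $S_I$. For each $n\in\mathbb N$ the following are equivalent: (1) the VC dimension of $\mathscr C$ as a class of functions on $S_I$ is at least $n$; (2) there exist sets $A_1,\dots,A_n\subseteq\Omega$, none belonging to $I$, such that for every $J\subseteq\{1,\dots,n\}$ there is $C\in\mathscr C$ with $A_i\subseteq C$ for all $i\in J$ and $A_i\cap C=\emptyset$ for all $i\notin J$. Moreover, in (2) the sets $A_i$ can be chosen in $\mathscr A$.
   Context: An ideal of subsets of $\Omega$ is a family closed under finite unions and under taking subsets. An ultrafilter on $\Omega$ is a family $\xi$ of nonempty subsets closed under finite intersections such that for each $A\subseteq\Omega$ either $A\in\xi$ or $\Omega\setminus A\in\xi$. ($S_I$ is the Stone space of the quotient Boolean algebra $2^\Omega/I$.) *)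

From Stdlib Require Import Arith Classical FunctionalExtensionality PropExtensionality.

Set Implicit Arguments.

Definition subset {Omega : Type} (A B : Omega -> Prop) : Prop :=
  forall x, A x -> B x.

Definition setI {Omega : Type} (A B : Omega -> Prop) : Omega -> Prop :=
  fun x => A x /\ B x.

Definition setU {Omega : Type} (A B : Omega -> Prop) : Omega -> Prop :=
  fun x => A x \/ B x.

Definition setC {Omega : Type} (A : Omega -> Prop) : Omega -> Prop :=
  fun x => ~ A x.

Definition disjoint {Omega : Type} (A B : Omega -> Prop) : Prop :=
  forall x, A x -> B x -> False.

Definition sigma_algebra {Omega : Type} (SA : (Omega -> Prop) -> Prop) : Prop :=
  SA (fun _ => True) /\
  (forall A, SA A -> SA (setC A)) /\
  (forall F : nat -> Omega -> Prop, (forall k, SA (F k)) ->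
     SA (fun x => exists k, F k x)).

Definition ideal {Omega : Type} (I : (Omega -> Prop) -> Prop) : Prop :=
  I (fun _ => False) /\
  (forall A B, I A -> I B -> I (setU A B)) /\
  (forall A B, subset B A -> I A -> I B).

Definition ultrafilter {Omega : Type} (xi : (Omega -> Prop) -> Prop) : Prop :=
  (forall A, xi A -> exists x, A x) /\
  (forall A B, xi A -> xi B -> xi (setI A B)) /\
  (forall A, xi A \/ xi (setC A)).

Definition in_S_I {Omega : Type} (I : (Omega -> Prop) -> Prop)
  (xi : (Omega -> Prop) -> Prop) : Prop :=
  ultrafilter xi /\ (forall A, I A -> ~ xi A).

(* VC dimension of the class C (viewed as functions xi |-> [C \in xi] on S_I)
   is at least n: some n distinct points of S_I are shattered. *)
Definition VC_dim_SI_ge {Omega : Type} (I : (Omega -> Prop) -> Prop)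
  (C : (Omega -> Prop) -> Prop) (n : nat) : Prop :=
  exists xi : nat -> (Omega -> Prop) -> Prop,
    (forall i, i < n -> in_S_I I (xi i)) /\
    (forall i j, i < n -> j < n -> xi i = xi j -> i = j) /\
    (forall J : nat -> Prop, exists c, C c /\
       forall i, i < n -> (xi i c <-> J i)).

(* condition (2), with the A_i additionally required to satisfy P *)
Definition cond2 {Omega : Type} (P : (Omega -> Prop) -> Prop)
  (I : (Omega -> Prop) -> Prop) (C : (Omega -> Prop) -> Prop) (n : nat) : Prop :=
  exists A : nat -> Omega -> Prop,
    (forall i, i < n -> P (A i) /\ ~ I (A i)) /\
    (forall J : nat -> Prop, exists c, C c /\
       (forall i, i < n -> J i -> subset (A i) c) /\
       (forall i, i < n -> ~ J i -> disjoint (A i) c)).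

From Stdlib Require Import Arith Lia Classical ClassicalEpsilon FunctionalExtensionality PropExtensionality.
From mathcomp Require classical_sets filter.

(* (2) => (1): for each A_i not in I the family of sets D with A_i \ D in I
   is a proper filter; any ultrafilter xi_i refining it (ultrafilter lemma)
   contains A_i and avoids I.  A concept containing A_i then lies in xi_i,
   and a concept disjoint from A_i does not, so the xi_i are shattered (and
   pairwise distinct, using the pattern J = {i}).

   (1) => (2): encode the subsets of {0,...,n-1} by the numbers k < 2^n
   (bit i of k says whether i is in the subset) and pick a concept c_k
   realising pattern k on xi_0, ..., xi_(n-1).  The "atom"
   A_i = intersection over k < 2^n of (c_k or its complement, according to
   bit i of k) is a finite intersection of sets of the sigma-algebra, each
   belonging to xi_i; hence A_i is measurable, lies in xi_i (so not in I),
   and c_k contains or misses A_i exactly as pattern k prescribes. *)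

Set Implicit Arguments.
Set Bullet Behavior "Strict Subproofs".

Section FiniteIntersections.
Variable Omega : Type.

Lemma set_ext (A B : Omega -> Prop) : (forall x, A x <-> B x) -> A = B.
Proof.
intros H; apply functional_extensionality; intros x.
apply propositional_extensionality, H.
Qed.

Definition bigcapn (N : nat) (F : nat -> Omega -> Prop) : Omega -> Prop :=
  fun x => forall k, k < N -> F k x.

Lemma bigcapn_closed (P : (Omega -> Prop) -> Prop) :
  P (fun _ => True) -> (forall A B, P A -> P B -> P (setI A B)) ->
  forall N F, (forall k, k < N -> P (F k)) -> P (bigcapn N F).
Proof.
intros HT HI N F; induction N as [|N IH]; intros HF.
- replace (bigcapn 0 F) with (fun _ : Omega => True); [exact HT|].
  apply set_ext; intros x; split; [intros _ k Hk; lia | tauto].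
- replace (bigcapn (S N) F) with (setI (bigcapn N F) (F N)).
  + apply HI; [apply IH; intros k Hk|]; apply HF; lia.
  + apply set_ext; intros x; unfold setI, bigcapn; split.
    * intros [Hlt HN] k Hk.
      destruct (Nat.eq_dec k N) as [->|Hne]; [exact HN | apply Hlt; lia].
    * intros H; split; [intros k Hk|]; apply H; lia.
Qed.

Lemma sigma_algebra_setI (SA : (Omega -> Prop) -> Prop) :
  sigma_algebra SA -> forall A B, SA A -> SA B -> SA (setI A B).
Proof.
intros [_ [HC HU]] A B HA HB.
pose (F := fun k : nat => match k with 0 => setC A | _ => setC B end).
replace (setI A B) with (setC (fun x => exists k, F k x)).
- apply HC, HU; intros [|k]; apply HC; assumption.
- apply set_ext; intros x; unfold setC, setI; split.
  + intros Hn; split; apply NNPP; intros Hx; apply Hn;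
      [exists 0 | exists 1]; exact Hx.
  + intros [Ha Hb] [[|k] Hk]; contradiction.
Qed.

End FiniteIntersections.

Section Ultrafilters.
Variable Omega : Type.
Implicit Types (xi : (Omega -> Prop) -> Prop) (A D E c : Omega -> Prop).

Lemma ultrafilter_up xi : ultrafilter xi ->
  forall D E, xi D -> subset D E -> xi E.
Proof.
intros [Hne [HI Hdich]] D E HD HDE.
destruct (Hdich E) as [HE|HCE]; [exact HE|].
destruct (Hne _ (HI _ _ HD HCE)) as [x [HDx HCEx]].
exfalso; exact (HCEx (HDE x HDx)).
Qed.

Lemma ultrafilter_full xi : ultrafilter xi -> xi (fun _ => True).
Proof.
intros Hu; destruct (proj2 (proj2 Hu) (fun _ => True)) as [H|H];
  [exact H | apply (ultrafilter_up Hu H); intros x _; exact I].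
Qed.

Lemma ultrafilter_disjoint xi A c :
  ultrafilter xi -> xi A -> disjoint A c -> ~ xi c.
Proof.
intros [Hne [HI _]] HA Hd Hc.
destruct (Hne _ (HI _ _ HA Hc)) as [x [HAx Hcx]].
exact (Hd x HAx Hcx).
Qed.

Lemma UltraFilter_ultrafilter xi : filter.UltraFilter xi -> ultrafilter xi.
Proof.
intros Hu; split; [|split].
- intros A HA; exact (filter.filter_ex HA).
- intros A B HA HB; exact (filter.filterI HA HB).
- intros A; exact (filter.in_ultra_setVsetC A Hu).
Qed.

Variable I : (Omega -> Prop) -> Prop.
Hypothesis hI : ideal I.

(* The sets containing A up to an element of I; its ultrafilter refinements
   are the points of S_I containing A. *)
Definition residual A : (Omega -> Prop) -> Prop := fun D => I (setI A (setC D)).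

Lemma residual_proper_filter A : ~ I A -> filter.ProperFilter (residual A).
Proof.
destruct hI as [I0 [IU IS]]; intros HA; constructor.
- intros H0; apply HA; apply (IS _ _ (fun x Ax => conj Ax (fun f : False => f)) H0).
- constructor.
  + apply (IS _ _ (fun x (Hx : setI A (setC (fun _ => True)) x) => proj2 Hx Logic.I) I0).
  + intros D E HD HE; refine (IS _ _ _ (IU _ _ HD HE)).
    intros x [Ax HDE].
    destruct (classic (D x)) as [Dx|nDx]; [right|left]; split; try assumption.
    intros Ex; exact (HDE (conj Dx Ex)).
  + intros D E HDE HD; refine (IS _ _ _ HD).
    intros x [Ax nEx]; split; [exact Ax | intros Dx; exact (nEx (HDE x Dx))].
Qed.

Lemma S_I_point_containing A : ~ I A -> exists xi, in_S_I I xi /\ xi A.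
Proof.
intros HA.
destruct (filter.ultraFilterLemma (residual_proper_filter HA)) as [xi [Hu Hres]].
pose proof (UltraFilter_ultrafilter Hu) as Huf.
destruct hI as [I0 [_ IS]].
assert (HxiA : xi A).
{ apply Hres; apply (IS _ _ (fun x (Hx : setI A (setC A) x) => proj2 Hx (proj1 Hx)) I0). }
exists xi; split; [split; [exact Huf|] | exact HxiA].
intros B HB HxiB.
assert (HxiCB : xi (setC B)).
{ apply Hres; apply (IS _ _ (fun x (Hx : setI A (setC (setC B)) x) => NNPP _ (proj2 Hx)) HB). }
exact (ultrafilter_disjoint Huf HxiB (fun x Bx nBx => nBx Bx) HxiCB).
Qed.

End Ultrafilters.

Lemma bit_pattern_exists (J : nat -> Prop) (n : nat) :
  exists k, k < 2 ^ n /\ forall i, i < n -> (Nat.testbit k i = true <-> J i).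
Proof.
revert J; induction n as [|n IH]; intros J.
- exists 0; split; [simpl; lia | intros i Hi; lia].
- destruct (IH (fun i => J (S i))) as [k [Hk Hbits]].
  destruct (classic (J 0)) as [HJ0|HJ0].
  + exists (2 * k + 1); split; [rewrite Nat.pow_succ_r'; lia|].
    intros [|i] Hi; [rewrite Nat.testbit_odd_0; tauto|].
    rewrite Nat.testbit_odd_succ by lia; apply Hbits; lia.
  + exists (2 * k); split; [rewrite Nat.pow_succ_r'; lia|].
    intros [|i] Hi; [rewrite Nat.testbit_even_0; split; [discriminate | tauto]|].
    rewrite Nat.testbit_even_succ by lia; apply Hbits; lia.
Qed.

Section Atoms.
Variable Omega : Type.

Definition atom_piece (c : nat -> Omega -> Prop) (i k : nat) : Omega -> Prop :=
  if Nat.testbit k i then c k else setC (c k).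

Definition atom (N : nat) (c : nat -> Omega -> Prop) (i : nat) : Omega -> Prop :=
  bigcapn N (atom_piece c i).

Lemma atom_subset N c i k :
  k < N -> Nat.testbit k i = true -> subset (atom N c i) (c k).
Proof.
intros Hk Hbit x Hx; specialize (Hx k Hk); unfold atom_piece in Hx.
rewrite Hbit in Hx; exact Hx.
Qed.

Lemma atom_disjoint N c i k :
  k < N -> Nat.testbit k i = false -> disjoint (atom N c i) (c k).
Proof.
intros Hk Hbit x Hx; specialize (Hx k Hk); unfold atom_piece in Hx.
rewrite Hbit in Hx; exact Hx.
Qed.

Lemma atom_measurable (SA : (Omega -> Prop) -> Prop) N c i :
  sigma_algebra SA -> (forall k, SA (c k)) -> SA (atom N c i).
Proof.
intros HSA Hc; unfold atom; apply bigcapn_closed;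
  [apply HSA | apply sigma_algebra_setI, HSA|].
intros k _; unfold atom_piece; destruct (Nat.testbit k i);
  [|apply HSA]; apply Hc.
Qed.

Lemma atom_in_ultrafilter (xi : (Omega -> Prop) -> Prop) N c i :
  ultrafilter xi -> (forall k, k < N -> (xi (c k) <-> Nat.testbit k i = true)) ->
  xi (atom N c i).
Proof.
intros Hu Hc; unfold atom; apply bigcapn_closed;
  [apply ultrafilter_full, Hu | apply Hu|].
intros k Hk; unfold atom_piece; destruct (Nat.testbit k i) eqn:Hbit.
- apply Hc; assumption.
- destruct (proj2 (proj2 Hu) (c k)) as [Hck|HCk]; [|exact HCk].
  apply Hc in Hck; [congruence | assumption].
Qed.

End Atoms.

Lemma shattered_points_give_atoms (Omega : Type) (SA : (Omega -> Prop) -> Prop)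
  (C I : (Omega -> Prop) -> Prop) (n : nat) :
  sigma_algebra SA -> (forall c, C c -> SA c) ->
  VC_dim_SI_ge I C n -> cond2 SA I C n.
Proof.
intros HSA HC [xi [Hxi [_ Hshatter]]].
destruct (choice (fun k c => C c /\ forall i, i < n -> (xi i c <-> Nat.testbit k i = true))
  (fun k => Hshatter (fun i => Nat.testbit k i = true))) as [c Hc].
exists (atom (2 ^ n) c); split.
- intros i Hi; split.
  + apply atom_measurable; [exact HSA | intros k; apply HC, Hc].
  + intros HIatom; destruct (Hxi i Hi) as [Hu Havoid].
    apply (Havoid _ HIatom), atom_in_ultrafilter; [exact Hu|].
    intros k _; apply Hc, Hi.
- intros J; destruct (bit_pattern_exists J n) as [k [Hk Hbits]].
  exists (c k); split; [apply Hc | split].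
  + intros i Hi HJ; apply atom_subset; [exact Hk | apply Hbits; assumption].
  + intros i Hi HJ; apply atom_disjoint; [exact Hk|].
    destruct (Nat.testbit k i) eqn:Hbit; [|reflexivity].
    exfalso; apply HJ, Hbits; assumption.
Qed.

Lemma separated_sets_give_shattered_points (Omega : Type)
  (P C I : (Omega -> Prop) -> Prop) (n : nat) :
  ideal I -> cond2 P I C n -> VC_dim_SI_ge I C n.
Proof.
intros hI [A [HA Hsep]].
destruct (choice (fun i xi => i < n -> in_S_I I xi /\ xi (A i))) as [xi Hxi].
{ intros i; destruct (lt_dec i n) as [Hi|Hi].
  - destruct (S_I_point_containing hI (A i) (proj2 (HA i Hi))) as [xi Hxi].
    exists xi; intros _; exact Hxi.
  - exists (fun _ => True); intros Hi'; contradiction. }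
assert (Hin : forall i c, i < n -> subset (A i) c -> xi i c).
{ intros i c Hi Hsub; destruct (Hxi i Hi) as [[Hu _] HAi].
  exact (ultrafilter_up Hu HAi Hsub). }
assert (Hout : forall i c, i < n -> disjoint (A i) c -> ~ xi i c).
{ intros i c Hi; destruct (Hxi i Hi) as [[Hu _] HAi].
  exact (ultrafilter_disjoint Hu HAi). }
exists xi; split; [|split].
- intros i Hi; apply Hxi, Hi.
- intros i j Hi Hj Heq; apply NNPP; intros Hne.
  destruct (Hsep (fun k => k = i)) as [c [_ [Hsub Hdisj]]].
  apply (Hout j c Hj (Hdisj j Hj (fun e => Hne (eq_sym e)))).
  rewrite <- Heq; apply Hin, Hsub; [exact Hi | exact Hi | reflexivity].
- intros J; destruct (Hsep J) as [c [Hc [Hsub Hdisj]]].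
  exists c; split; [exact Hc|]; intros i Hi; split.
  + intros Hxic; apply NNPP; intros HJ; exact (Hout i c Hi (Hdisj i Hi HJ) Hxic).
  + intros HJ; apply Hin, Hsub; assumption.
Qed.

Lemma cond2_weaken (Omega : Type) (P Q I C : (Omega -> Prop) -> Prop) (n : nat) :
  (forall A, P A -> Q A) -> cond2 P I C n -> cond2 Q I C n.
Proof.
intros HPQ [A [HA Hsep]]; exists A; split; [|exact Hsep].
intros i Hi; destruct (HA i Hi) as [HP HnI]; split; [apply HPQ|]; assumption.
Qed.

Theorem mainTheorem8 (Omega : Type) (SA : (Omega -> Prop) -> Prop)
  (C : (Omega -> Prop) -> Prop) (I : (Omega -> Prop) -> Prop)
  (hSA : sigma_algebra SA) (hC : forall c, C c -> SA c) (hI : ideal I)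
  (n : nat) :
  (VC_dim_SI_ge I C n <-> cond2 (fun _ => True) I C n) /\
  (VC_dim_SI_ge I C n <-> cond2 SA I C n).
Proof.
assert (H12 : VC_dim_SI_ge I C n -> cond2 SA I C n)
  by exact (shattered_points_give_atoms hSA hC).
assert (H21 : forall P, cond2 P I C n -> VC_dim_SI_ge I C n)
  by (intros P; exact (separated_sets_give_shattered_points hI)).
split; split.
- intros H; exact (cond2_weaken (fun _ => True) (fun _ _ => Logic.I) (H12 H)).
- apply H21.
- exact H12.
- apply H21.
Qed.
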